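(* Let $\Phi_t=(I-t\Psi)^{-1}$ be an inverse-linear path with $h_0$-self-adjoint $\Psi$, fix $X,Y\in\mathfrak g$, and set $A=[\Psi X,Y]+[X,\Psi Y]$, $B=[\Psi X,\Psi Y]$, $C=[\Psi X,Y]+[\Psi Y,X]$, $D=\Psi^2[X,Y]-\Psi A+B$. Then for every $t$ in the domain of $\kappa=\kappa^\Psi$, $$\kappa(t)=\alpha+\beta t+\gamma t^2+\delta t^3-\tfrac34 t^4\,|D|_{h_t}^2,$$ where $|D|_{h_t}^2=\langle\Phi_tD,D\rangle$ and $\alpha=\tfrac14|[X,Y]|^2$, $\beta=-\tfrac34\langle\Psi[X,Y],[X,Y]\rangle$, $\gamma=-\tfrac34|\Psi[X,Y]|^2+\tfrac32\langle\Psi[X,Y],A\rangle-\tfrac12\langle[X,Y],B\rangle-\tfrac14|A|^2+\tfrac14|C|^2-\langle[\Psi X,X],[\Psi Y,Y]\rangle$, $\delta=-\tfrac34\langle\Psi^3[X,Y],[X,Y]\rangle+\tfrac32\langle\Psi^2[X,Y],A\rangle-\tfrac32\langle\Psi[X,Y],B\rangle-\tfrac34\langle\Psi A,A\rangle-\tfrac14\langle\Psi C,C\rangle+\langle\Psi[\Psi X,X],[\Psi Y,Y]\rangle+\langle A,B\rangle$.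
   Context: $G$ is a compact Lie group with Lie algebra $\mathfrak g$ and bi-invariant metric $h_0$; $\langle Z_1,Z_2\rangle=h_0(Z_1,Z_2)$, $|Z|^2=\langle Z,Z\rangle$. A left-invariant metric $h$ corresponds to the $h_0$-self-adjoint positive definite $\Phi$ with $h(X,Y)=\langle\Phi X,Y\rangle$ on $\mathfrak g$. An inverse-linear path is $\Phi_t=(I-t\Psi)^{-1}$ with $\Psi$ $h_0$-self-adjoint; $h_t$ is the left-invariant metric with matrix $\Phi_t$, defined on the open interval of $t$ (containing $0$) where $I-t\Psi$ is positive definite; this interval is the domain of $\kappa$. The unnormalized sectional curvature is $k_h(Z_1,Z_2)=h(R_h(Z_1,Z_2)Z_2,Z_1)$, and $\kappa(t)=\kappa^\Psi(t)=k_{h_t}(\Phi_t^{-1}X,\Phi_t^{-1}Y)$. *)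

(* The Lie algebra g of G is modelled as R^n (column vectors),
   in an h0-orthonormal basis, so that h0 is the standard dot product. *)
From HB Require Import structures.
From mathcomp Require Import all_boot all_order all_algebra.
From mathcomp Require Import reals.
Set Implicit Arguments. Unset Strict Implicit. Unset Printing Implicit Defensive.
Import Order.TTheory GRing.Theory Num.Theory.
Local Open Scope ring_scope.

Section LieDefs.
Variables (R : realType) (n : nat).
Implicit Types (u v w x y z : 'cV[R]_n) (Phi Psi : 'M[R]_n).

Definition ip u v : R := (u^T *m v) ord0 ord0.

Definition is_lie_bracket (br : 'cV[R]_n -> 'cV[R]_n -> 'cV[R]_n) : Prop :=
  [/\ (forall (a : R) x y z, br (a *: x + y) z = a *: br x z + br y z),
      (forall (a : R) x y z, br z (a *: x + y) = a *: br z x + br z y),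
      (forall x y, br x y = - br y x) &
      (forall x y z, br x (br y z) + br y (br z x) + br z (br x y) = 0)].

Definition ad_invariant (br : 'cV[R]_n -> 'cV[R]_n -> 'cV[R]_n) : Prop :=
  forall x y z, ip (br x y) z = ip x (br y z).

Definition posdef Phi : Prop := forall v, v != 0 -> 0 < ip (Phi *m v) v.

Definition metric Phi u v : R := ip (Phi *m u) v.

Definition basis_vec (i : 'I_n) : 'cV[R]_n := delta_mx i ord0.

(* Koszul formula for left-invariant fields:
   2 h(nabla_X Y, Z) = h([X,Y],Z) - h([Y,Z],X) + h([Z,X],Y) *)
Definition koszul_vec br Phi x y : 'cV[R]_n :=
  \col_(i < n) (metric Phi (br x y) (basis_vec i)
                - metric Phi (br y (basis_vec i)) x
                + metric Phi (br (basis_vec i) x) y).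

Definition lc_conn br Phi x y : 'cV[R]_n :=
  (2 : R)^-1 *: (invmx Phi *m koszul_vec br Phi x y).

Definition curv br Phi x y z : 'cV[R]_n :=
  lc_conn br Phi x (lc_conn br Phi y z) - lc_conn br Phi y (lc_conn br Phi x z)
  - lc_conn br Phi (br x y) z.

Definition sec_curv br Phi z1 z2 : R := metric Phi (curv br Phi z1 z2 z2) z1.

Definition Phi_path Psi (t : R) : 'M[R]_n := invmx (1%:M - t *: Psi).

Definition in_domain Psi (t : R) : Prop := posdef (1%:M - t *: Psi).

Definition kappa br Psi x y (t : R) : R :=
  sec_curv br (Phi_path Psi t) (invmx (Phi_path Psi t) *m x)
                               (invmx (Phi_path Psi t) *m y).
End LieDefs.

From HB Require Import structures.
From mathcomp Require Import all_boot all_order all_algebra.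
From mathcomp Require Import reals ring lra.
Import Order.TTheory GRing.Theory Num.Theory.
Local Open Scope ring_scope.

(* Put [x = (I - t Psi) X] and [y = (I - t Psi) Y], so that [Phi_t x = X] and
   [Phi_t y = Y].  For a symmetric invertible [Phi] the Koszul formula gives
   [nabla_a b = ([a,b] + Phi^-1 ([b, Phi a] + [a, Phi b])) / 2], and with
   ad-invariance the sectional curvature [k(x,y)] becomes an expression in
   brackets of [x, y, X, Y] containing [Phi_t] only through
   [<Phi_t [x,y], [x,y]>].  All brackets are polynomial in [t], and the
   splitting [[x,y] = (I - t Psi) P + t^2 D] with
   [P = [X,Y] + t Psi [X,Y] - t A] turns that term into a cubic polynomial plus
   [t^4 <Phi_t D, D>]. *)

Section InnerProduct.
Context {R : realType} {n : nat}.
Implicit Types (u v w : 'cV[R]_n) (M : 'M[R]_n).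

Lemma ipC u v : ip u v = ip v u.
Proof. by rewrite /ip -[v^T *m u]trmxK trmx_mul trmxK [in RHS]mxE. Qed.

Lemma ipDl u v w : ip (u + v) w = ip u w + ip v w.
Proof. by rewrite /ip linearD /= mulmxDl mxE. Qed.

Lemma ipDr u v w : ip w (u + v) = ip w u + ip w v.
Proof. by rewrite /ip mulmxDr mxE. Qed.

Lemma ipZl (a : R) u w : ip (a *: u) w = a * ip u w.
Proof. by rewrite /ip linearZ /= -scalemxAl mxE. Qed.

Lemma ipZr (a : R) u w : ip w (a *: u) = a * ip w u.
Proof. by rewrite /ip -scalemxAr mxE. Qed.

Lemma ipNl u w : ip (- u) w = - ip u w.
Proof. by rewrite -scaleN1r ipZl mulN1r. Qed.

Lemma ipNr u w : ip w (- u) = - ip w u.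
Proof. by rewrite -scaleN1r ipZr mulN1r. Qed.

Lemma ipBl u v w : ip (u - v) w = ip u w - ip v w.
Proof. by rewrite ipDl ipNl. Qed.

Lemma ipBr u v w : ip w (u - v) = ip w u - ip w v.
Proof. by rewrite ipDr ipNr. Qed.

Lemma ip0l w : ip 0 w = 0.
Proof. by rewrite /ip linear0 mul0mx mxE. Qed.

Lemma ipMl M u v : ip (M *m u) v = ip u (M^T *m v).
Proof. by rewrite /ip trmx_mul mulmxA. Qed.

Lemma ip_sym_mx M u v : M^T = M -> ip (M *m u) v = ip u (M *m v).
Proof. by move=> sM; rewrite ipMl sM. Qed.

Lemma ip_sym_mxC M u v : M^T = M -> ip u (M *m v) = ip v (M *m u).
Proof. by move=> sM; rewrite -ip_sym_mx // ipC. Qed.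

Lemma ip_basis_vecl u (i : 'I_n) : ip (basis_vec R i) u = u i ord0.
Proof. by rewrite /ip /basis_vec trmx_delta -rowE mxE. Qed.

Lemma ip_basis_vecr u (i : 'I_n) : ip u (basis_vec R i) = u i ord0.
Proof. by rewrite ipC ip_basis_vecl. Qed.

End InnerProduct.

Lemma posdef_unitmx (R : realType) (n : nat) (M : 'M[R]_n) :
  M^T = M -> posdef M -> M \in unitmx.
Proof.
move=> sM pM; rewrite -row_free_unit -kermx_eq0; apply/negP => /negP.
case/rowV0Pn => v /sub_kermxP vM v0.
have Mv : M *m v^T = 0 by rewrite -[M]sM -trmx_mul vM linear0.
have : v^T != 0 by rewrite -(inj_eq (@trmx_inj _ _ _)) trmxK linear0.
by move/pM; rewrite Mv ip0l ltxx.
Qed.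

Section LieBracket.
Context {R : realType} {n : nat} {br : 'cV[R]_n -> 'cV[R]_n -> 'cV[R]_n}.
Hypothesis br_lie : is_lie_bracket br.
Hypothesis br_ad : ad_invariant br.
Implicit Types (a b c : 'cV[R]_n).

Lemma brC a b : br a b = - br b a.
Proof. by case: br_lie. Qed.

Lemma brDl a b c : br (a + b) c = br a c + br b c.
Proof. by case: br_lie => linl _ _ _; rewrite -[a]scale1r linl !scale1r. Qed.

Lemma brDr a b c : br c (a + b) = br c a + br c b.
Proof. by case: br_lie => _ linr _ _; rewrite -[a]scale1r linr !scale1r. Qed.

Lemma br0l c : br 0 c = 0.
Proof. by apply: (@addrI _ (br 0 c)); rewrite -brDl !addr0. Qed.

Lemma br0r c : br c 0 = 0.
Proof. by rewrite brC br0l oppr0. Qed.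

Lemma brZl (k : R) a c : br (k *: a) c = k *: br a c.
Proof. by case: br_lie => linl _ _ _; rewrite -[k *: a]addr0 linl br0l addr0. Qed.

Lemma brZr (k : R) a c : br c (k *: a) = k *: br c a.
Proof. by case: br_lie => _ linr _ _; rewrite -[k *: a]addr0 linr br0r addr0. Qed.

Lemma brBl a b c : br (a - b) c = br a c - br b c.
Proof. by rewrite brDl -scaleN1r brZl scaleN1r. Qed.

Lemma brBr a b c : br c (a - b) = br c a - br c b.
Proof. by rewrite brDr -scaleN1r brZr scaleN1r. Qed.

Lemma brxx a : br a a = 0.
Proof.
have : (2 : R) *: br a a = 0 by rewrite scaler_nat mulr2n {1}brC addNr.
by move/eqP; rewrite scaler_eq0 pnatr_eq0 /= => /eqP.
Qed.

Lemma ip_brA a b c : ip (br a b) c = ip a (br b c).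
Proof. exact: br_ad. Qed.

Lemma ip_br_rot a b c : ip (br a b) c = ip (br b c) a.
Proof. by rewrite ip_brA ipC. Qed.

Lemma ip_brC a b c : ip (br a b) c = - ip (br b a) c.
Proof. by rewrite brC ipNl. Qed.

Lemma ip_br_self a b : ip (br a b) a = 0.
Proof.
have : ip (br a b) a = - ip (br a b) a by rewrite {1}ip_br_rot ip_brC.
lra.
Qed.

Lemma koszul_vecE (Phi : 'M[R]_n) a b : Phi^T = Phi ->
  koszul_vec br Phi a b = Phi *m br a b + br b (Phi *m a) + br a (Phi *m b).
Proof.
move=> sPhi; apply/matrixP => i j; rewrite (ord1 j) !mxE /metric.
rewrite ip_basis_vecr !ip_sym_mx // ip_brC ip_brA ip_basis_vecl ip_brA ip_basis_vecl.
by rewrite !mxE opprK.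
Qed.

Section LeviCivita.
Variable Phi : 'M[R]_n.
Hypotheses (Phi_sym : Phi^T = Phi) (Phi_unit : Phi \in unitmx).
Let S := invmx Phi.

Lemma lc_connE a b :
  lc_conn br Phi a b = 2^-1 *: (br a b + S *m (br b (Phi *m a) + br a (Phi *m b))).
Proof. by rewrite /lc_conn koszul_vecE // -addrA mulmxDr mulKmx. Qed.

Lemma lc_conn_self a : lc_conn br Phi a a = S *m br a (Phi *m a).
Proof.
rewrite lc_connE brxx add0r mulmxDr scalerDr -scalerDl.
have -> : (2^-1 + 2^-1 : R) = 1 by field.
by rewrite scale1r.
Qed.

Lemma sec_curvE X Y : let x := S *m X in let y := S *m Y in
  sec_curv br Phi x y =
    - ip (br y Y) (S *m br x X)
    + 4^-1 * ip (S *m (br y X + br x Y)) (br y X + br x Y)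
    - 3/4 * ip (Phi *m br x y) (br x y) + 2^-1 * ip (br x y) (br x Y - br y X).
Proof.
move=> x y.
have S_sym : S^T = S by rewrite /S trmx_inv Phi_sym.
have PhiS v : Phi *m (S *m v) = v by rewrite /S mulKVmx.
have ipSl u v : ip (S *m u) v = ip u (S *m v) by rewrite ip_sym_mx.
have ipSC u v : ip u (S *m v) = ip v (S *m u) by rewrite -ipSl ipC.
set M := br y X + br x Y.
rewrite /sec_curv /metric /curv lc_conn_self (lc_connE x y) !PhiS -/M.
set w := 2^-1 *: _.
rewrite !lc_connE !PhiS -/S ip_sym_mx // PhiS !(ipBl, ipDl, ipZl) !ipSl -/x.
set v := br y Y.
(* Ad-invariance moves the brackets in each Koszul term of [nabla_x nabla_y y],
   [nabla_y nabla_x y] and [nabla_[x,y] y] into one of the shapes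
   [<u, S v>], [<u, Phi v>], [<u, v>] of the right-hand side. *)
have xyy_1 : ip (br x (S *m v)) X = - ip v (S *m br x X) by rewrite ip_brC ip_brA ipSl.
have xyy_2 : ip (br (S *m v) X) x = - ip v (S *m br x X).
  by rewrite ip_brA ipSl [br X x]brC mulmxN ipNr.
have yxy_1 : ip (br y w) X = - ip w (br y X) by rewrite ip_brC ip_brA.
have yxy_2 : ip (br w Y) x = - ip w (br x Y) by rewrite ip_brA [br Y x]brC ipNr.
have yxy_3 : ip (br y (Phi *m w)) x = ip (br x y) (Phi *m w) by rewrite ip_br_rot ip_br_rot.
have bry_1 : ip (br (br x y) y) X = ip (br x y) (br y X) by rewrite ip_brA.
have bry_2 : ip (br y (Phi *m br x y)) x = ip (br x y) (Phi *m br x y).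
  by rewrite ip_br_rot ip_br_rot.
have bry_3 : ip (br (br x y) Y) x = - ip (br x y) (br x Y) by rewrite ip_brA [br Y x]brC ipNr.
rewrite !ipDl xyy_1 xyy_2 ip_br_self yxy_1 yxy_2 yxy_3 bry_1 bry_2 bry_3.
rewrite /w -!scalemxAr !(ipZl, ipZr, ipDl, ipDr, mulmxDr, ipBr, ipBl) PhiS.
rewrite ?ipSl PhiS ipNr (ip_sym_mx _ _ _ Phi_sym) (ipSC (br x Y) (br y X)).
lra.
Qed.

End LeviCivita.

End LieBracket.

Section InverseLinearPath.
Variables (R : realType) (n : nat) (br : 'cV[R]_n -> 'cV[R]_n -> 'cV[R]_n).
Variables (Psi : 'M[R]_n) (X Y : 'cV[R]_n) (t : R).
Hypotheses (br_lie : is_lie_bracket br) (br_ad : ad_invariant br).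
Hypotheses (Psi_sym : Psi^T = Psi) (t_dom : in_domain Psi t).

Let S := 1%:M - t *: Psi.
Let x := S *m X.
Let y := S *m Y.
Let XY := br X Y.
Let A := br (Psi *m X) Y + br X (Psi *m Y).
Let B := br (Psi *m X) (Psi *m Y).
Let C := br (Psi *m X) Y + br (Psi *m Y) X.
Let D := Psi *m (Psi *m XY) - Psi *m A + B.
Let P := XY + t *: (Psi *m XY) - t *: A.
Let E := XY - t *: A + t^+2 *: B.

Lemma path_mulmxE (v : 'cV[R]_n) : S *m v = v - t *: (Psi *m v).
Proof. by rewrite mulmxBl mul1mx -scalemxAl. Qed.

Lemma path_sym : S^T = S.
Proof. by rewrite /S linearB /= trmx1 linearZ /= Psi_sym. Qed.

Lemma path_unitmx : S \in unitmx.
Proof. exact: posdef_unitmx path_sym t_dom. Qed.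

Lemma Phi_path_sym : (Phi_path Psi t)^T = Phi_path Psi t.
Proof. by rewrite trmx_inv path_sym. Qed.

Lemma kappa_pathE : kappa br Psi X Y t =
    - ip (br y Y) (S *m br x X)
    + 4^-1 * ip (S *m (br y X + br x Y)) (br y X + br x Y)
    - 3/4 * ip (Phi_path Psi t *m br x y) (br x y) + 2^-1 * ip (br x y) (br x Y - br y X).
Proof.
have Phi_unit : Phi_path Psi t \in unitmx by rewrite unitmx_inv path_unitmx.
have invPhi : invmx (Phi_path Psi t) = S by rewrite invmxK.
by have := sec_curvE br_lie br_ad _ Phi_path_sym Phi_unit X Y; rewrite /kappa invPhi.
Qed.

Lemma br_path_self v : br (S *m v) v = - t *: br (Psi *m v) v.
Proof.
by rewrite path_mulmxE (brBl br_lie) (brZl br_lie) (brxx br_lie) sub0r scaleNr.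
Qed.

Lemma br_path_sum : br y X + br x Y = - t *: C.
Proof.
rewrite /x /y !path_mulmxE !(brBl br_lie) !(brZl br_lie) /C (brC br_lie Y X).
by apply/matrixP => i j; rewrite !mxE; ring.
Qed.

Lemma br_path_diff : br x Y - br y X = 2%:R *: XY - t *: A.
Proof.
rewrite /x /y !path_mulmxE !(brBl br_lie) !(brZl br_lie) /A /XY.
rewrite (brC br_lie Y X) (brC br_lie (Psi *m Y) X).
by apply/matrixP => i j; rewrite !mxE; ring.
Qed.

Lemma br_path_pair : br x y = E.
Proof.
rewrite /x /y !path_mulmxE !(brBl br_lie, brBr br_lie, brZl br_lie, brZr br_lie) /A /XY /B.
by apply/matrixP => i j; rewrite !mxE; ring.
Qed.

Lemma br_path_split : br x y = S *m P + t^+2 *: D.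
Proof.
rewrite br_path_pair path_mulmxE /P /D.
do 3 rewrite ?(mulmxDr, mulmxBr, mulmxN, scalerDr, scalerBr, scalerN, scalerA) -?scalemxAr.
by apply/matrixP => i j; rewrite !mxE; ring.
Qed.

Lemma ip_Phi_path_pair : ip (Phi_path Psi t *m br x y) (br x y) =
  ip P (br x y) + t^+2 * (ip D P + t^+2 * ip (Phi_path Psi t *m D) D).
Proof.
have PhiS v : Phi_path Psi t *m (S *m v) = v by rewrite mulKmx // path_unitmx.
have Phi_xy : Phi_path Psi t *m br x y = P + t^+2 *: (Phi_path Psi t *m D).
  by rewrite br_path_split mulmxDr PhiS -scalemxAr.
rewrite {1}Phi_xy ipDl ipZl (ip_sym_mx _ _ _ Phi_path_sym) Phi_xy ipDr ipZr.
by rewrite (ip_sym_mx _ _ _ Phi_path_sym).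
Qed.

Lemma kappa_path_expansion : kappa br Psi X Y t =
  - t^+2 * ip (br (Psi *m Y) Y) (S *m br (Psi *m X) X) + t^+2 / 4 * ip (S *m C) C
  - 3/4 * (ip P E + t^+2 * (ip D P + t^+2 * ip (Phi_path Psi t *m D) D))
  + 2^-1 * ip E (2%:R *: XY - t *: A).
Proof.
rewrite kappa_pathE ip_Phi_path_pair br_path_sum br_path_diff !br_path_self br_path_pair.
rewrite -!scalemxAr !(ipZl, ipZr); ring.
Qed.

End InverseLinearPath.

Theorem mainTheorem2 (R : realType) (n : nat)
    (br : 'cV[R]_n -> 'cV[R]_n -> 'cV[R]_n) (Psi : 'M[R]_n) (X Y : 'cV[R]_n) :
  is_lie_bracket br -> ad_invariant br -> Psi^T = Psi ->
  let XY := br X Y in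
  let A := br (Psi *m X) Y + br X (Psi *m Y) in
  let B := br (Psi *m X) (Psi *m Y) in
  let C := br (Psi *m X) Y + br (Psi *m Y) X in
  let D := Psi *m (Psi *m XY) - Psi *m A + B in
  let alpha := 4^-1 * ip XY XY in
  let beta := - (3/4) * ip (Psi *m XY) XY in
  let gamma := - (3/4) * ip (Psi *m XY) (Psi *m XY) + (3/2) * ip (Psi *m XY) A
               - 2^-1 * ip XY B - 4^-1 * ip A A + 4^-1 * ip C C
               - ip (br (Psi *m X) X) (br (Psi *m Y) Y) in
  let delta := - (3/4) * ip (Psi *m (Psi *m (Psi *m XY))) XY
               + (3/2) * ip (Psi *m (Psi *m XY)) A
               - (3/2) * ip (Psi *m XY) B - (3/4) * ip (Psi *m A) A
               - 4^-1 * ip (Psi *m C) C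
               + ip (Psi *m br (Psi *m X) X) (br (Psi *m Y) Y) + ip A B in
  forall t : R, in_domain Psi t ->
    kappa br Psi X Y t =
      alpha + beta * t + gamma * t ^+ 2 + delta * t ^+ 3
      - (3/4) * t ^+ 4 * ip (Phi_path Psi t *m D) D.
Proof.
move=> br_lie br_ad Psi_sym XY A B C D alpha beta gamma delta t t_dom.
rewrite kappa_path_expansion // -/XY -/A -/B -/C -/D.
set Q := ip (Phi_path Psi t *m D) D; clearbody Q.
rewrite /alpha /beta /gamma /delta /D; clearbody XY A B C.
rewrite !path_mulmxE.
do 4 rewrite ?(ipDl, ipDr, ipBl, ipBr, ipZl, ipZr, ipNl, ipNr, mulmxDr, mulmxBr, mulmxN) -?scalemxAr.
rewrite !(ip_sym_mx _ _ _ Psi_sym).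
have PsiC u v : ip u (Psi *m v) = ip v (Psi *m u) by rewrite ip_sym_mxC.
have Psi2C u v : ip u (Psi *m (Psi *m v)) = ip v (Psi *m (Psi *m u)).
  by rewrite -(ip_sym_mx _ _ _ Psi_sym) PsiC ipC.
rewrite (ipC A XY) (ipC B XY) (ipC B A) (PsiC A XY) (Psi2C A XY) (PsiC B XY).
rewrite (ipC (br (Psi *m Y) Y)) (PsiC (br (Psi *m Y) Y)).
by field.
Qed.
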